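(* Let $X$ be a block-independent process and suppose that $Z$ is admissible with respect to $Z^\star$. Then \[ I(X;Z(X))=I(X;Z^\star(X))=\lim_{n\to\infty}\frac{I(X_1^n;Z^\star(X_1^n))}{n}, \] and the limit on the right-hand side exists.
   Context: A process $X=(X_i)_{i\in\mathbb N}$ (with $X_m^n=(X_m,\dots,X_n)$) is block-independent with blocklength $b$ if for every $t\ge1$ and $n=tb$, $\Pr[X_1^n=x_1^n]=\prod_{i=1}^t\Pr[X_1^b=x_{(i-1)b+1}^{ib}]$. A channel $Z$ with finite input alphabet assigns to each finite input string $x$ a random output $Z(x)$ in a discrete set; applying a channel to several inputs means independent applications. $A\to B\to C$ denotes a Markov chain; logs base 2. Information rate $I(X;Z(X))=\liminf_n I(X_1^n;Z(X_1^n))/n$. $Z$ is admissible with respect to $Z^\star$ (same input alphabet) if: (1) there is $c>0$ with $H(Z^\star(X_1^n))\le cn$ for every process $X$ and $n\ge1$; (2) $I(X;Z(X))=I(X;Z^\star(X))$ for every process $X$; (3) for every $X$ and $1\le m\le n$: $X_1^n\to Z^\star(X_1^m),Z^\star(X_{m+1}^n)\to Z^\star(X_1^n)$; (4a) for every integer $\tau\ge1$ there is a non-decreasing $\gamma_m=o(m)$ with $\sum_m\gamma_m/m^2<\infty$ such that for every $X$ and $n\ge\tau$ there are $W_{\mathrm{pre}},W_{\mathrm{suf}}$ with $X_1^n\to Z^\star(X_1^n),W_{\mathrm{pre}}\to Z^\star(X_1^\tau),Z^\star(X_{\tau+1}^n)$, $X_1^n\to Z^\star(X_1^n),W_{\mathrm{suf}}\to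 Z^\star(X_1^{n-\tau}),Z^\star(X_{n-\tau+1}^n)$, $H(W_{\mathrm{pre}}),H(W_{\mathrm{suf}})\le\gamma_n$; (4b) there is $\alpha_m=o(m)$ such that for every $X$, $b$, $t$ there is $W$ with $X_1^{tb}\to Z^\star(X_1^{tb}),W\to Z^\star(X_1^b),\dots,Z^\star(X_{(t-1)b+1}^{tb})$ and $H(W)\le t\alpha_b$; (5) there is $\beta_m=o(m)$ such that for every $X$, $b$, $t$ there are $Y$ with $X_1^{tb}\to Z^\star(X_1^b),\dots,Z^\star(X_{(t-1)b+1}^{tb})\to Y$ and a deterministic $\phi$ with $Z^\star(X_1^{tb})=\phi(Z^\star(X_1^b),\dots,Z^\star(X_{(t-1)b+1}^{tb}),Y)$ and $\max_z\log|\phi^{-1}(z)|\le t\beta_b$. *)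

From HB Require Import structures.
From mathcomp Require Import all_boot all_order all_algebra.
From mathcomp Require Import all_classical all_reals all_analysis.
Set Implicit Arguments. Unset Strict Implicit. Unset Printing Implicit Defensive.
Import Order.TTheory GRing.Theory Num.Theory numFieldNormedType.Exports.
Local Open Scope classical_set_scope.
Local Open Scope ring_scope.

Section Info.
Variable R : realType.

Definition log2 (x : R) : R := ln x / ln 2.

Definition psum {T : choiceType} (f : T -> R) : R :=
  fine (\esum_(t in [set: T]) (f t)%:E).

Definition is_pmf {T : choiceType} (p : T -> R) : Prop :=
  (forall t, 0 <= p t) /\ (\esum_(t in [set: T]) (p t)%:E = 1%E).

(** Shannon entropy (bits), convention 0 log 0 = 0 *)
Definition ent {T : choiceType} (p : T -> R) : \bar R :=
  \esum_(t in [set: T]) (- (p t * log2 (p t)))%:E.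

Definition cent {T U : choiceType} (Q : T * U -> R) : \bar R :=
  \esum_(q in [set: T * U])
     (Q q * log2 (psum (fun t' : T => Q (t', q.2)) / Q q))%:E.

Definition mi {T U : choiceType} (Q : T * U -> R) : \bar R :=
  (ent (fun t : T => psum (fun u : U => Q (t, u))) - cent Q)%E.

(** Markov chain A -> B -> C for a joint pmf Q on A * B * C:
    p(a,b,c) p(b) = p(a,b) p(b,c). *)
Definition markov {T1 T2 T3 : choiceType} (Q : T1 * T2 * T3 -> R) : Prop :=
  forall a b c,
    Q (a, b, c) * psum (fun ac : T1 * T3 => Q (ac.1, b, ac.2))
    = psum (fun c' : T3 => Q (a, b, c')) * psum (fun a' : T1 => Q (a', b, c)).

(** A process over the finite alphabet A, given by its finite-dimensional
    distributions: px s = Pr[X_1^{|s|} = s]. *)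
Record process (A : finType) := Process {
  px : seq A -> R;
  px_ge0 : forall s, 0 <= px s;
  px_nil : px [::] = 1;
  px_cons : forall s, px s = \sum_(a : A) px (rcons s a) }.

Record channel (A : finType) (O : choiceType) := Channel {
  chan : seq A -> O -> R;
  chan_ge0 : forall x o, 0 <= chan x o;
  chan_sum1 : forall x, \esum_(o in [set: O]) (chan x o)%:E = 1%E }.

Variable A : finType.

Definition block (b i : nat) (x : seq A) : seq A := take b (drop (i * b) x).

Definition blocks (b t : nat) (x : seq A) : seq (seq A) :=
  [seq block b i x | i <- iota 0 t].

Definition block_independent (X : process A) : Prop :=
  exists b : nat, (0 < b)%N /\
    forall (t : nat) (x : seq A), (0 < t)%N -> size x = (t * b)%N ->
      px X x = \prod_(i < t) px X (block b i x).

Definition pXn (X : process A) (n : nat) (x : seq A) : R :=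
  if size x == n then px X x else 0.

Variable O : choiceType.

Definition indep_out (Z : channel A O) (xs : seq (seq A)) (os : seq O) : R :=
  if size os == size xs then \prod_(p <- zip xs os) chan Z p.1 p.2 else 0.

Definition joint_n (X : process A) (Z : channel A O) (n : nat) (p : seq A * O) : R :=
  pXn X n p.1 * chan Z p.1 p.2.

Definition info_rate (X : process A) (Z : channel A O) : \bar R :=
  limn_einf (fun n : nat => mi (joint_n X Z n.+1) * ((n.+1)%:R^-1)%:E)%E.

Definition out_n (X : process A) (Z : channel A O) (n : nat) (z : O) : R :=
  psum (fun x : seq A => joint_n X Z n (x, z)).

(** Coupling of (X_1^n, Z(X_1^n), W, (Z(pieces))) with
    X_1^n -> Z(X_1^n), W -> (Z(piece_1), ..., Z(piece_k)) and H(W) <= bound,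
    where the pieces of x are [pieces x] and the Z(piece_i) are
    independent applications of Z. *)
Definition refine_coupling (X : process A) (Z : channel A O) (n : nat)
    (pieces : seq A -> seq (seq A)) (bound : R) : Prop :=
  exists Q : seq A * (O * nat) * seq O -> R,
    is_pmf Q /\
    (forall x z, psum (fun wc : nat * seq O => Q (x, (z, wc.1), wc.2))
                 = joint_n X Z n (x, z)) /\
    (forall x zs, psum (fun zw : O * nat => Q (x, zw, zs))
                 = pXn X n x * indep_out Z (pieces x) zs) /\
    markov Q /\
    (ent (fun w : nat => psum (fun r : seq A * O * seq O => Q (r.1.1, (r.1.2, w), r.2)))
       <= bound%:E)%E.

(** Coupling of (X_1^n, (Z(X_1^m), Z(X_{m+1}^n)), Z(X_1^n)) with
    X_1^n -> Z(X_1^m), Z(X_{m+1}^n) -> Z(X_1^n). *)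
Definition merge_coupling (X : process A) (Z : channel A O) (n m : nat) : Prop :=
  exists Q : seq A * seq O * O -> R,
    is_pmf Q /\
    (forall x zs, psum (fun z : O => Q (x, zs, z))
                 = pXn X n x * indep_out Z [:: take m x; drop m x] zs) /\
    (forall x z, psum (fun zs : seq O => Q (x, zs, z)) = joint_n X Z n (x, z)) /\
    markov Q.

(** Condition (5) for given X, b, t: a Y with
    X_1^{tb} -> (Z(block_1), ..., Z(block_t)) -> Y and a deterministic phi with
    Z(X_1^{tb}) = phi(blocks outputs, Y), all fibres (on the support) of size
    at most 2^{bound}. *)
Definition determ_merge (X : process A) (Z : channel A O) (b t : nat) (bound : R) : Prop :=
  exists (Q : seq A * seq O * nat -> R) (phi : seq O * nat -> O),
    is_pmf Q /\
    (forall x zs, psum (fun y : nat => Q (x, zs, y))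
                 = pXn X (t * b) x * indep_out Z (blocks b t x) zs) /\
    markov Q /\
    (forall x z, psum (fun p : seq O * nat => if phi p == z then Q (x, p.1, p.2) else 0)
                 = joint_n X Z (t * b) (x, z)) /\
    (forall z, exists s : seq (seq O * nat),
        (forall p, phi p = z -> 0 < psum (fun x : seq A => Q (x, p.1, p.2)) -> p \in s) /\
        (size s)%:R <= powR 2 bound).

End Info.

Definition little_o_id (R : realType) (a : nat -> R) : Prop :=
  ((fun m : nat => a m / m%:R) : R^nat) @ \oo --> (0 : R^o).

Definition admissible (R : realType) (A : finType) (O O' : choiceType)
    (Z : channel R A O) (Zs : channel R A O') : Prop :=
  (* (1) *)
  (exists c : R, 0 < c /\ forall (X : process R A) (n : nat), (0 < n)%N ->
       (ent (out_n X Zs n) <= (c * n%:R)%:E)%E) /\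
  (* (2) *)
  (forall X : process R A, info_rate X Z = info_rate X Zs) /\
  (* (3) *)
  (forall (X : process R A) (m n : nat), (1 <= m)%N -> (m <= n)%N ->
       merge_coupling X Zs n m) /\
  (* (4a) *)
  (forall tau : nat, (1 <= tau)%N ->
     exists gamma : nat -> R,
       {homo gamma : i j / (i <= j)%N >-> i <= j} /\
       little_o_id gamma /\
       cvg ((series (fun m : nat => gamma m.+1 / (m.+1)%:R ^+ 2) : nat -> R) @ \oo) /\
       forall (X : process R A) (n : nat), (tau <= n)%N ->
         refine_coupling X Zs n (fun x => [:: take tau x; drop tau x]) (gamma n) /\
         refine_coupling X Zs n (fun x => [:: take (n - tau) x; drop (n - tau) x]) (gamma n)) /\
  (* (4b) *)
  (exists alpha : nat -> R, little_o_id alpha /\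
     forall (X : process R A) (b t : nat), (0 < b)%N -> (0 < t)%N ->
       refine_coupling X Zs (t * b) (blocks b t) (t%:R * alpha b)) /\
  (* (5) *)
  (exists beta : nat -> R, little_o_id beta /\
     forall (X : process R A) (b t : nat), (0 < b)%N -> (0 < t)%N ->
       determ_merge X Zs b t (t%:R * beta b)).

(* Let a_n = I(X_1^n; Z*(X_1^n)) and let b be the block length of X.
   Merging (3) and the data-processing inequality bound a_n by the information
   that X_1^n shares with the two independent outputs Z*(X_1^m), Z*(X_{m+1}^n);
   when m is a multiple of b, block independence splits this into a_m + a_(n-m).
   Conversely, splitting off a suffix of length r < b as in (4a) loses at most
   H(W) = o(n) bits, by the chain rule for conditional entropy, so
   a_(tb) + a_r <= a_(tb+r) + o(tb + r). A Fekete-type argument then shows that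
   a_n / n converges to inf_k a_(kb) / (kb), and (2) carries the limit over to Z. *)

From Pilot Require Import Defs.
From HB Require Import structures.
From mathcomp Require Import all_boot all_order all_algebra.
From mathcomp Require Import all_classical all_reals all_analysis.
From mathcomp Require Import ring lra zify.
Import Order.TTheory GRing.Theory Num.Theory numFieldNormedType.Exports.
Local Open Scope classical_set_scope.
Local Open Scope ring_scope.
Set Implicit Arguments. Unset Strict Implicit. Unset Printing Implicit Defensive.

Section ExtendedSums.
Variable R : realType.
Local Open Scope ereal_scope.
Implicit Types (T U : choiceType).

Lemma esumT_single T (a : T -> \bar R) (t0 : T) :
  (forall t, t != t0 -> a t = 0) -> 0 <= a t0 ->
  \esum_(t in [set: T]) a t = a t0.
Proof.
move=> a0 a0ge; rewrite -(esum_set1 a0ge) [RHS]esum_mkcond.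
apply: eq_esum => t _; case: ifPn => // h; apply: a0; apply/eqP => e.
by move/negP: h; apply; rewrite e; apply/mem_set.
Qed.

Lemma ge0_esumZl T (c : R) (a : T -> \bar R) :
  (0 <= c)%R -> (forall t, 0 <= a t) ->
  \esum_(t in [set: T]) (c%:E * a t) = c%:E * \esum_(t in [set: T]) a t.
Proof.
move=> c0 a0; have [->|cneq0] := eqVneq c 0%R.
  by rewrite mul0e esum1// => t _; rewrite mul0e.
have cgt0 : (0 < c)%R by rewrite lt_def cneq0.
have esumZ_le (k : R) (b : T -> \bar R) : (0 <= k)%R -> (forall t, 0 <= b t) ->
    \esum_(t in [set: T]) (k%:E * b t) <= k%:E * \esum_(t in [set: T]) b t.
  move=> k0 b0; apply: ge_ereal_sup => _ [F [finF _] <-] /=.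
  rewrite -ge0_mule_fsumr//; apply: lee_wpmul2l; first by rewrite lee_fin.
  by apply: ereal_sup_ubound; exists F.
apply/eqP; rewrite eq_le esumZ_le //=.
have -> : \esum_(t in [set: T]) a t =
    \esum_(t in [set: T]) (c^-1%:E * (c%:E * a t)).
  by apply: eq_esum => t _; rewrite muleA -EFinM mulVf// mul1e.
have cVc0 : (0 <= c^-1)%R by rewrite invr_ge0.
have ca0 t : 0 <= c%:E * a t by rewrite mule_ge0 // lee_fin.
apply: le_trans (lee_wpmul2l _ (esumZ_le _ _ cVc0 ca0)) _; first by rewrite lee_fin.
by rewrite muleA -EFinM mulfV// mul1e.
Qed.

Lemma ge0_esumZr T (c : R) (a : T -> \bar R) :
  (0 <= c)%R -> (forall t, 0 <= a t) ->
  \esum_(t in [set: T]) (a t * c%:E) = (\esum_(t in [set: T]) a t) * c%:E.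
Proof.
move=> c0 a0; rewrite [RHS]muleC -ge0_esumZl//; apply: eq_esum => t _; exact: muleC.
Qed.

Lemma esumT_pair T U (a : T * U -> \bar R) : (forall p, 0 <= a p) ->
  \esum_(p in [set: T * U]) a p =
  \esum_(t in [set: T]) \esum_(u in [set: U]) a (t, u).
Proof.
move=> a0; rewrite esum_esum//.
have -> : [set: T] `*`` (fun=> [set: U]) = [set: T * U].
  by apply/seteqP; split => // -[x y].
by apply: eq_esum => -[].
Qed.

Lemma reindex_esumT T U (e : T -> U) (a : U -> \bar R) :
  bijective e -> \esum_(u in [set: U]) a u = \esum_(t in [set: T]) a (e t).
Proof. by move=> be; apply: reindex_esum; rewrite setTT_bijective. Qed.

Lemma exchange_esumT T U (a : T -> U -> \bar R) :
  (forall t u, 0 <= a t u) ->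
  \esum_(t in [set: T]) \esum_(u in [set: U]) a t u =
  \esum_(u in [set: U]) \esum_(t in [set: T]) a t u.
Proof.
move=> a0; rewrite -(@esumT_pair _ _ (fun p : T * U => a p.1 p.2))//.
rewrite -(@esumT_pair _ _ (fun p : U * T => a p.2 p.1))//.
rewrite (@reindex_esumT _ _ (fun p : U * T => (p.2, p.1)))//.
by exists (fun p : T * U => (p.2, p.1)) => -[].
Qed.

Lemma reindex_esum_support T U (D : set T) (e : T -> U) (a : U -> \bar R) :
  {in D &, injective e} ->
  (forall u, a u != 0 -> exists2 t, D t & e t = u) ->
  \esum_(u in [set: U]) a u = \esum_(t in D) a (e t).
Proof.
move=> ei asupp.
have -> : \esum_(u in [set: U]) a u = \esum_(u in e @` D) a u.
  rewrite [RHS]esum_mkcond; apply: eq_esum => u _.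
  case: ifPn => // /negP uD; have [//|/asupp [t Dt etu]] := eqVneq (a u) 0.
  by exfalso; apply: uD; rewrite inE; exists t.
by apply: reindex_esum; split => // t Dt; exists t.
Qed.

Lemma reindex_esum_mkcond T U (D : set T) (e : T -> U)
    (a : U -> \bar R) (b : T -> \bar R) :
  {in D &, injective e} -> (forall u, a u != 0 -> exists2 t, D t & e t = u) ->
  (forall t, D t -> b t = a (e t)) -> (forall t, ~ D t -> b t = 0) ->
  \esum_(u in [set: U]) a u = \esum_(t in [set: T]) b t.
Proof.
move=> ei es eb eb0; rewrite (reindex_esum_support ei es) esum_mkcond.
apply: eq_esum => t _; case: ifPn => [/set_mem Dt|/negP nDt]; first by rewrite eb.
by rewrite eb0 // => Dt; apply: nDt; exact: mem_set.
Qed.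

Lemma esum_le1_fin_num T (a : T -> \bar R) (S : set T) :
  (forall t, 0 <= a t) -> \esum_(t in S) a t <= 1 -> \esum_(t in S) a t \is a fin_num.
Proof.
move=> a0 le1; rewrite ge0_fin_numE ?(le_lt_trans le1) ?ltry//.
by apply: esum_ge0 => t _.
Qed.

Lemma le_term_esumT T (a : T -> \bar R) (t0 : T) :
  (forall t, 0 <= a t) -> a t0 <= \esum_(t in [set: T]) a t.
Proof.
move=> a0; apply: esum_ge; exists [set t0]; first by split => //; exact: finite_set1.
by rewrite fsbig_set1.
Qed.

Lemma esumT_mul_pmfr T U (f : T -> R) (g : U -> R) :
  (forall t, 0 <= f t)%R -> (forall u, 0 <= g u)%R ->
  \esum_(u in [set: U]) (g u)%:E = 1 ->
  \esum_(p in [set: T * U]) (f p.1 * g p.2)%:E = \esum_(t in [set: T]) (f t)%:E.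
Proof.
move=> f0 g0 g1; rewrite esumT_pair /=; last by move=> p; rewrite lee_fin mulr_ge0.
apply: eq_esum => t _; under eq_esum do rewrite EFinM.
by rewrite ge0_esumZl // ?g1 ?mule1 // => u; rewrite lee_fin.
Qed.

Lemma esumT_mul_pmfl T U (f : T -> R) (g : U -> R) :
  (forall t, 0 <= f t)%R -> (forall u, 0 <= g u)%R ->
  \esum_(t in [set: T]) (f t)%:E = 1 ->
  \esum_(p in [set: T * U]) (f p.1 * g p.2)%:E = \esum_(u in [set: U]) (g u)%:E.
Proof.
move=> f0 g0 f1; rewrite esumT_pair /=; last by move=> p; rewrite lee_fin mulr_ge0.
rewrite exchange_esumT; last by move=> t u; rewrite lee_fin mulr_ge0.
apply: eq_esum => u _; under eq_esum do rewrite mulrC EFinM.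
by rewrite ge0_esumZl // ?f1 ?mule1 // => t; rewrite lee_fin.
Qed.

Lemma ge0_le_fin_num (x y : \bar R) : 0 <= x -> x <= y -> y \is a fin_num ->
  x \is a fin_num.
Proof.
move=> x0 xy yf; rewrite ge0_fin_numE // (le_lt_trans xy) // ltey.
by move: yf; rewrite fin_numE => /andP[].
Qed.

End ExtendedSums.

Section BinaryLogarithm.
Variable R : realType.
Implicit Types x y a b p : R.

Lemma ln2_gt0 : (0 : R) < ln 2.
Proof. by apply: ln_gt0; rewrite ltr1n. Qed.

Lemma log2_0 : log2 (0 : R) = 0.
Proof. by rewrite /log2 ln0 // mul0r. Qed.

Lemma log2_ge0 x : 1 <= x -> 0 <= log2 x.
Proof. by move=> x1; apply: divr_ge0; [exact: ln_ge0 | exact: ltW ln2_gt0]. Qed.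

Lemma log2_le0 x : x <= 1 -> log2 x <= 0.
Proof. by move=> x1; rewrite /log2 pmulr_lle0 ?invr_gt0 ?ln2_gt0 // ln_le0. Qed.

Lemma ler_log2 x y : 0 < x -> x <= y -> log2 x <= log2 y.
Proof.
move=> x0 xy; rewrite /log2 ler_pM2r ?invr_gt0 ?ln2_gt0 //.
by rewrite ler_ln // posrE (lt_le_trans x0).
Qed.

Lemma log2M x y : 0 < x -> 0 < y -> log2 (x * y) = log2 x + log2 y.
Proof. by move=> x0 y0; rewrite /log2 lnM ?posrE // mulrDl. Qed.

Lemma log2V x : 0 <= x -> log2 (x^-1) = - log2 x.
Proof.
rewrite le_eqVlt => /orP[/eqP <-|x0]; first by rewrite invr0 log2_0 oppr0.
by rewrite /log2 lnV ?posrE // mulNr.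
Qed.

Lemma log2_le_subr1 x : 0 < x -> log2 x <= (x - 1) / ln 2.
Proof.
move=> x0; rewrite /log2 ler_pM2r ?invr_gt0 ?ln2_gt0 //.
have := @le_ln1Dx R (x - 1); rewrite addrCA subrr addr0; apply.
by rewrite ltrBrDl; lra.
Qed.

Lemma log2_ratio_ge0 a b : 0 <= b -> b <= a -> 0 <= log2 (a / b).
Proof.
rewrite le_eqVlt => /orP[/eqP <-|b0] ba; first by rewrite invr0 mulr0 log2_0.
by apply: log2_ge0; rewrite ler_pdivlMr // mul1r.
Qed.

Lemma entropy_term_ge0 p : 0 <= p -> p <= 1 -> 0 <= - (p * log2 p).
Proof. by move=> p0 p1; rewrite oppr_ge0 mulr_ge0_le0 // log2_le0. Qed.

Lemma entropy_term_le p : 0 <= p -> - (p * log2 p) <= (ln 2)^-1.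
Proof.
rewrite le_eqVlt => /orP[/eqP <-|p0]; first by rewrite mul0r oppr0 invr_ge0 ltW ?ln2_gt0.
rewrite -mulrN -log2V; last exact: ltW.
have h : log2 p^-1 <= (p^-1 - 1) / ln 2 by rewrite log2_le_subr1 ?invr_gt0.
apply: le_trans (ler_wpM2l (ltW p0) h) _.
have ln2V0 : 0 <= (ln 2 : R)^-1 by rewrite invr_ge0 ltW ?ln2_gt0.
rewrite mulrA mulrBr mulfV ?gt_eqF // mulr1 ler_piMl //; lra.
Qed.

Lemma entropy_termM a b : 0 <= a -> 0 <= b ->
  - (a * b * log2 (a * b)) = b * - (a * log2 a) + a * - (b * log2 b).
Proof.
rewrite le_eqVlt => /orP[/eqP <-|a0]; first by rewrite !(mulr0, mul0r, oppr0, addr0).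
rewrite le_eqVlt => /orP[/eqP <-|b0]; first by rewrite !(mulr0, mul0r, oppr0, addr0).
by rewrite log2M //; ring.
Qed.

Lemma centropy_termM a b a' b' : 0 <= a -> a <= a' -> 0 <= b -> b <= b' ->
  a * b * log2 (a' * b' / (a * b)) =
  b * (a * log2 (a' / a)) + a * (b * log2 (b' / b)).
Proof.
rewrite le_eqVlt => /orP[/eqP <-|a0] aa'; first by rewrite !(mul0r, mulr0, addr0).
rewrite le_eqVlt => /orP[/eqP <-|b0] bb'; first by rewrite !(mul0r, mulr0, addr0).
have a'0 : 0 < a' by apply: lt_le_trans aa'.
have b'0 : 0 < b' by apply: lt_le_trans bb'.
have -> : a' * b' / (a * b) = (a' / a) * (b' / b) by field; rewrite !gt_eqF.
by rewrite log2M ?divr_gt0 //; ring.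
Qed.

End BinaryLogarithm.

Lemma log2_div_le (R : realType) (a c q d : R) : 0 < a -> 0 < c -> 0 < q -> 0 < d ->
  log2 (a / q) <= log2 (d / c) + (a * c / (q * d) - 1) / ln 2.
Proof.
move=> a0 c0 q0 d0.
have -> : a / q = (d / c) * (a * c / (q * d)) by field; rewrite !gt_eqF.
by rewrite log2M ?divr_gt0 ?mulr_gt0 // lerD2l log2_le_subr1 // divr_gt0 ?mulr_gt0.
Qed.

(* Random variables are maps out of a discrete probability space (W, Q), and
   (conditional) entropies are expectations of -log2 of atom probabilities;
   [ent_law], [cent_law] and [mi_law] recover [ent], [cent] and [mi]. *)
Section Law.
Variables (R : realType) (W : choiceType) (Q : W -> R).
Hypothesis Qpmf : is_pmf Q.
Let Q0 : forall w, 0 <= Q w := Qpmf.1.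
Let Q1 : (\esum_(w in [set: W]) (Q w)%:E = 1)%E := Qpmf.2.
Implicit Types (T U V : choiceType).

Definition fibre T (f : W -> T) (t : T) (w : W) : R := if f w == t then Q w else 0.

Definition law T (f : W -> T) (t : T) : R := psum (fibre f t).

Definition atom T (f : W -> T) (w : W) : R := law f (f w).

Definition entropy T (f : W -> T) : \bar R :=
  \esum_(w in [set: W]) (Q w * - log2 (atom f w))%:E.

Definition centropy T U (f : W -> T) (g : W -> U) : \bar R :=
  \esum_(w in [set: W]) (Q w * log2 (atom g w / atom (fun w => (f w, g w)) w))%:E.

Lemma fibre_ge0 T (f : W -> T) t w : 0 <= fibre f t w.
Proof. by rewrite /fibre; case: ifP. Qed.

Lemma fibre_le T (f : W -> T) t w : fibre f t w <= Q w.
Proof. by rewrite /fibre; case: ifP. Qed.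

Lemma lawE T (f : W -> T) t : (law f t)%:E = \esum_(w in [set: W]) (fibre f t w)%:E.
Proof.
rewrite /law /psum fineK //; apply: esum_le1_fin_num => [w|].
  by rewrite lee_fin fibre_ge0.
by rewrite -Q1; apply: le_esum => w _; rewrite lee_fin fibre_le.
Qed.

Lemma law_ge0 T (f : W -> T) t : 0 <= law f t.
Proof. by rewrite -lee_fin lawE; apply: esum_ge0 => w _; rewrite lee_fin fibre_ge0. Qed.

Lemma law_le1 T (f : W -> T) t : law f t <= 1.
Proof. by rewrite -lee_fin lawE -Q1; apply: le_esum => w _; rewrite lee_fin fibre_le. Qed.

Lemma esum_law T (f : W -> T) (h : T -> R) : (forall t, 0 <= h t) ->
  \esum_(w in [set: W]) (Q w * h (f w))%:E = \esum_(t in [set: T]) (law f t * h t)%:E.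
Proof.
move=> h0.
transitivity (\esum_(t in [set: T]) \esum_(w in [set: W]) (fibre f t w * h t)%:E).
  rewrite (@exchange_esumT _ T W (fun t w => (fibre f t w * h t)%:E)); last first.
    by move=> t w; rewrite lee_fin mulr_ge0 // fibre_ge0.
  apply: eq_esum => w _; rewrite (@esumT_single _ _ _ (f w)).
  - by rewrite /fibre eqxx.
  - by move=> t ne; rewrite /fibre eq_sym (negbTE ne) mul0r.
  - by rewrite lee_fin mulr_ge0 // fibre_ge0.
apply: eq_esum => t _; rewrite EFinM lawE -ge0_esumZr //.
by move=> w; rewrite lee_fin fibre_ge0.
Qed.

Lemma law_sum1 T (f : W -> T) : (\esum_(t in [set: T]) (law f t)%:E = 1)%E.
Proof.
rewrite -Q1; have := @esum_law T f (fun=> 1) (fun=> ler01).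
by under eq_esum do rewrite mulr1; under [in X in _ = X -> _]eq_esum do rewrite mulr1.
Qed.

Lemma esum_law_pair1 T V (f : W -> T) (g : W -> V) v :
  (\esum_(t in [set: T]) (law (fun w => (f w, g w)) (t, v))%:E = (law g v)%:E)%E.
Proof.
under eq_esum do rewrite lawE.
rewrite (@exchange_esumT _ T W (fun t w => (fibre (fun w => (f w, g w)) (t, v) w)%:E));
  last by move=> t w; rewrite lee_fin fibre_ge0.
rewrite lawE; apply: eq_esum => w _; rewrite (@esumT_single _ _ _ (f w)).
- by rewrite /fibre xpair_eqE eqxx.
- by move=> t ne; rewrite /fibre xpair_eqE eq_sym (negbTE ne).
- by rewrite lee_fin fibre_ge0.
Qed.

Lemma esum_law_pair2 T V (f : W -> T) (g : W -> V) t :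
  (\esum_(v in [set: V]) (law (fun w => (f w, g w)) (t, v))%:E = (law f t)%:E)%E.
Proof.
under eq_esum do rewrite lawE.
rewrite (@exchange_esumT _ V W (fun v w => (fibre (fun w => (f w, g w)) (t, v) w)%:E));
  last by move=> v w; rewrite lee_fin fibre_ge0.
rewrite lawE; apply: eq_esum => w _; rewrite (@esumT_single _ _ _ (g w)).
- by rewrite /fibre xpair_eqE eqxx andbT.
- by move=> v ne; rewrite /fibre xpair_eqE [g w == v]eq_sym (negbTE ne) andbF.
- by rewrite lee_fin fibre_ge0.
Qed.

Lemma law_param T V (f : W -> T) (e : T -> V -> W) t :
  (forall v, f (e t v) = t) -> injective (e t) ->
  (forall w, f w = t -> exists v, e t v = w) ->
  law f t = psum (fun v => Q (e t v)).
Proof.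
move=> fe ei es; rewrite /law /psum; congr fine.
rewrite (@reindex_esum_support _ _ _ [set: V] (e t)).
- by apply: eq_esum => v _; rewrite /fibre fe eqxx.
- by move=> x y _ _; apply: ei.
- move=> w; rewrite /fibre; have [fw _|] := eqVneq (f w) t; last by rewrite eqxx.
  by have [v ev] := es w fw; exists v.
Qed.

Lemma eq_atom T U (f : W -> T) (g : W -> U) w :
  (forall w', (f w' == f w) = (g w' == g w)) -> atom f w = atom g w.
Proof.
by move=> e; rewrite /atom /law; congr psum; apply: funext => w'; rewrite /fibre e.
Qed.

Lemma le_atom T U (f : W -> T) (g : W -> U) w :
  (forall w', f w' == f w -> g w' == g w) -> atom f w <= atom g w.
Proof.
move=> e; rewrite -lee_fin /atom !lawE; apply: le_esum => w' _; rewrite lee_fin /fibre.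
by case: ifPn => [/e -> //|_]; case: ifP.
Qed.

Lemma atom_id w : atom id w = Q w.
Proof.
apply/eqP; rewrite -(@eqe R) /atom lawE (@esumT_single _ _ _ w).
- by rewrite /fibre eqxx.
- by move=> w' ne; rewrite /fibre (negbTE ne).
- by rewrite lee_fin fibre_ge0.
Qed.

Lemma atom_cst T (t : T) w : atom (fun=> t) w = 1.
Proof. by rewrite /atom /law /psum /fibre; under eq_esum do rewrite eqxx; rewrite Q1. Qed.

Lemma atom_ge T (f : W -> T) w : Q w <= atom f w.
Proof. by rewrite -atom_id; apply: le_atom => w' /eqP ->. Qed.

Lemma atom_ge0 T (f : W -> T) w : 0 <= atom f w.
Proof. exact: law_ge0. Qed.

Lemma atom_gt0 T (f : W -> T) w : 0 < Q w -> 0 < atom f w.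
Proof. by move=> /lt_le_trans; apply; apply: atom_ge. Qed.

Lemma atom_le1 T (f : W -> T) w : atom f w <= 1.
Proof. exact: law_le1. Qed.

Lemma atom_pair_le T U (f : W -> T) (g : W -> U) w :
  atom (fun w => (f w, g w)) w <= atom g w.
Proof. by apply: le_atom => w'; rewrite xpair_eqE => /andP[]. Qed.

Lemma centropy_term_ge0 T U (f : W -> T) (g : W -> U) w :
  0 <= Q w * log2 (atom g w / atom (fun w => (f w, g w)) w).
Proof. by rewrite mulr_ge0 // log2_ratio_ge0 ?atom_ge0 ?atom_pair_le. Qed.

Lemma entropy_ge0 T (f : W -> T) : (0 <= entropy f)%E.
Proof.
apply: esum_ge0 => w _; rewrite lee_fin mulr_ge0 // oppr_ge0 log2_le0 //.
exact: atom_le1.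
Qed.

Lemma centropy_ge0 T U (f : W -> T) (g : W -> U) : (0 <= centropy f g)%E.
Proof. by apply: esum_ge0 => w _; rewrite lee_fin centropy_term_ge0. Qed.

Lemma ent_law T (f : W -> T) : ent (law f) = entropy f.
Proof.
rewrite /ent /entropy (@esum_law _ f (fun t => - log2 (law f t))); last first.
  by move=> t; rewrite oppr_ge0 log2_le0 // law_le1.
by apply: eq_esum => t _; rewrite mulrN.
Qed.

Lemma cent_law T U (f : W -> T) (g : W -> U) :
  cent (law (fun w => (f w, g w))) = centropy f g.
Proof.
have psum_pair u : psum (fun t' => law (fun w => (f w, g w)) (t', u)) = law g u.
  by rewrite /psum esum_law_pair1.
rewrite /cent; under eq_esum do rewrite psum_pair.
rewrite -(@esum_law _ (fun w => (f w, g w))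
  (fun q => log2 (law g q.2 / law (fun w => (f w, g w)) q))) //.
move=> [t u]; apply: log2_ratio_ge0; first exact: law_ge0.
rewrite -lee_fin -(esum_law_pair1 f g) /=.
apply: le_term_esumT => t'.
by rewrite lee_fin law_ge0.
Qed.

Lemma mi_law T U (f : W -> T) (g : W -> U) :
  mi (law (fun w => (f w, g w))) = (entropy f - centropy f g)%E.
Proof.
rewrite /mi cent_law -ent_law; congr (ent _ - _)%E; apply: funext => t.
by rewrite /psum esum_law_pair2.
Qed.

End Law.

Section EntropyInequalities.
Variables (R : realType) (W : choiceType) (Q : W -> R).
Hypothesis Qpmf : is_pmf Q.
Let Q0 : forall w, 0 <= Q w := Qpmf.1.
Let Q1 : (\esum_(w in [set: W]) (Q w)%:E = 1)%E := Qpmf.2.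
Implicit Types (T U V : choiceType).
Local Notation law := (law Q).
Local Notation atom := (atom Q).
Local Notation entropy := (entropy Q).
Local Notation centropy := (centropy Q).

Section GibbsWeight.
Variables (T U V : choiceType) (f : W -> T) (g : W -> U) (k : W -> V).
Let fgk w := (f w, (g w, k w)).
Let gk w := (g w, k w).
Let fk w := (f w, k w).

(* the ratio whose logarithm compares H(f | g, k) with H(f | k) *)
Definition gibbs_weight (w : W) : R :=
  atom gk w * atom fk w / (atom fgk w * atom k w).

Lemma gibbs_weight_ge0 w : 0 <= gibbs_weight w.
Proof. by rewrite divr_ge0 ?mulr_ge0 ?atom_ge0. Qed.

Lemma esum_gibbs_weight_le1 :
  (\esum_(w in [set: W]) (Q w * gibbs_weight w)%:E <= 1)%E.
Proof.
pose h (x : T * (U * V)) := law gk x.2 * law fk (x.1, x.2.2) / (law fgk x * law k x.2.2).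
have h0 x : 0 <= h x by rewrite divr_ge0 ?mulr_ge0 ?law_ge0.
rewrite [X in (X <= _)%E](esum_law Qpmf fgk h0).
apply: (@le_trans _ _ (\esum_(x in [set: T * (U * V)])
    (law fk (x.1, x.2.2) * (law gk x.2 / law k x.2.2))%:E)).
  apply: le_esum => x _; rewrite lee_fin /h.
  have [->|pn] := eqVneq (law fgk x) 0; first by rewrite mul0r mulr_ge0 ?divr_ge0 ?law_ge0.
  have [->|Dn] := eqVneq (law k x.2.2) 0; first by rewrite !(invr0, mulr0).
  by rewrite le_eqVlt; apply/orP; left; apply/eqP; field; rewrite pn Dn.
rewrite esumT_pair; last by move=> x; rewrite lee_fin mulr_ge0 ?divr_ge0 ?law_ge0.
rewrite exchange_esumT /=; last by move=> t uv; rewrite lee_fin mulr_ge0 ?divr_ge0 ?law_ge0.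
rewrite -(law_sum1 Qpmf gk); apply: le_esum => uv _.
under eq_esum do rewrite EFinM.
rewrite ge0_esumZr ?divr_ge0 ?law_ge0 //; last by move=> t; rewrite lee_fin law_ge0.
rewrite (esum_law_pair1 Qpmf f k) -EFinM lee_fin.
have [->|Dn] := eqVneq (law k uv.2) 0; first by rewrite mul0r law_ge0.
by rewrite mulrCA mulfV // mulr1.
Qed.

End GibbsWeight.

(* Gibbs' inequality, through [log2 x <= (x - 1) / ln 2] and
   [esum_gibbs_weight_le1]; the constant [(ln 2)^-1] is added on both sides
   so that every summand stays nonnegative. *)
Lemma centropy_pair_le T U V (f : W -> T) (g : W -> U) (k : W -> V) :
  (centropy f (fun w => (g w, k w)) <= centropy f k)%E.
Proof.
set c0 := (ln 2 : R)^-1; have c00 : 0 <= c0 by rewrite invr_ge0 ltW ?ln2_gt0.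
pose r w := Q w * gibbs_weight f g k w.
have r0 w : 0 <= r w by rewrite mulr_ge0 ?gibbs_weight_ge0.
have pointwise w : Q w * log2 (atom (fun w => (g w, k w)) w /
                       atom (fun w => (f w, (g w, k w))) w) + Q w * c0 <=
                   Q w * log2 (atom k w / atom (fun w => (f w, k w)) w) + r w * c0.
  have [Qw0|Qwn] := eqVneq (Q w) 0; first by rewrite /r Qw0 !mul0r addr0.
  have Qp : 0 < Q w by rewrite lt_def Qwn Q0.
  have := log2_div_le (atom_gt0 Qpmf (fun w => (g w, k w)) Qp)
    (atom_gt0 Qpmf (fun w => (f w, k w)) Qp)
    (atom_gt0 Qpmf (fun w => (f w, (g w, k w))) Qp) (atom_gt0 Qpmf k Qp).
  move=> /(ler_wpM2l (ltW Qp)); rewrite /r /gibbs_weight -/c0; nra.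
have summed :
    (centropy f (fun w => (g w, k w)) + \esum_(w in [set: W]) (Q w * c0)%:E <=
     centropy f k + \esum_(w in [set: W]) (r w * c0)%:E)%E.
  rewrite -!esumD; try by move=> w _; rewrite lee_fin ?centropy_term_ge0 // mulr_ge0 ?Q0 ?r0.
  by apply: le_esum => w _; rewrite -!EFinD lee_fin pointwise.
have sumQ : \esum_(w in [set: W]) (Q w * c0)%:E = c0%:E.
  under eq_esum do rewrite EFinM.
  by rewrite ge0_esumZr ?Q1 ?mul1e // => w; rewrite lee_fin.
have sumr : \esum_(w in [set: W]) (r w * c0)%:E = ((\esum_(w in [set: W]) (r w)%:E) * c0%:E)%E.
  by under eq_esum do rewrite EFinM; rewrite ge0_esumZr // => w; rewrite lee_fin.
move: summed; rewrite sumQ sumr => h.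
have weight_le : ((\esum_(w in [set: W]) (r w)%:E) * c0%:E <= c0%:E)%E.
  by rewrite -[leRHS]mul1e lee_wpmul2r ?lee_fin // esum_gibbs_weight_le1.
by rewrite -(@leeD2rE _ c0%:E) // (le_trans h) // leeD2l.
Qed.

Lemma centropy_le_entropy T U (f : W -> T) (g : W -> U) : (centropy f g <= entropy f)%E.
Proof.
have -> : entropy f = centropy f (fun=> tt).
  apply: eq_esum => w _; rewrite atom_cst // div1r log2V ?atom_ge0 //.
  by congr (_ * - log2 _)%:E; apply: eq_atom => w'; rewrite xpair_eqE eqxx andbT.
apply: le_trans (centropy_pair_le f g (fun=> tt)); rewrite le_eqVlt; apply/orP; left.
apply/eqP; apply: eq_esum => w _; congr (_ * log2 (_ / _))%:E.
- by apply: eq_atom => w'; rewrite xpair_eqE eqxx andbT.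
- by apply: eq_atom => w'; rewrite !xpair_eqE eqxx andbT.
Qed.

Lemma centropy_chain_le T U V (f : W -> T) (g : W -> U) (h : W -> V) :
  (centropy f g <= centropy f (fun w => (g w, h w)) + centropy h g)%E.
Proof.
rewrite -esumD; try by move=> w _; rewrite lee_fin centropy_term_ge0.
apply: le_esum => w _; rewrite -EFinD lee_fin -mulrDr.
have [->|Qwn] := eqVneq (Q w) 0; first by rewrite !mul0r.
have Qp : 0 < Q w by rewrite lt_def Qwn Q0.
rewrite ler_pM2l //.
set a := atom g w; set b := atom (fun w => (f w, g w)) w.
set c := atom (fun w => (g w, h w)) w; set d := atom (fun w => (f w, (g w, h w))) w.
have -> : atom (fun w => (h w, g w)) w = c.
  by apply: eq_atom => w'; rewrite !xpair_eqE andbC.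
have db : d <= b by apply: (le_atom Qpmf) => w'; rewrite !xpair_eqE => /andP[-> /andP[->]].
have ap : 0 < a := atom_gt0 Qpmf _ Qp. have bp : 0 < b := atom_gt0 Qpmf _ Qp.
have cp : 0 < c := atom_gt0 Qpmf _ Qp. have dp : 0 < d := atom_gt0 Qpmf _ Qp.
rewrite -log2M ?divr_gt0 //.
have -> : c / d * (a / c) = a / d by field; rewrite !gt_eqF.
by apply: ler_log2; rewrite ?divr_gt0 // ler_pM2l // lef_pV2 // posrE.
Qed.

Lemma fin_num_centropy T U (f : W -> T) (g : W -> U) :
  entropy f \is a fin_num -> centropy f g \is a fin_num.
Proof. exact/ge0_le_fin_num/centropy_le_entropy/centropy_ge0. Qed.

Lemma fin_num_mi_law T U (f : W -> T) (g : W -> U) : entropy f \is a fin_num ->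
  mi (law (fun w => (f w, g w))) \is a fin_num.
Proof.
by move=> fH; rewrite (mi_law Qpmf) fin_numB fH fin_num_centropy.
Qed.

Lemma mi_law_ge0 T U (f : W -> T) (g : W -> U) : entropy f \is a fin_num ->
  (0 <= mi (law (fun w => (f w, g w))))%E.
Proof.
move=> fH; rewrite (mi_law Qpmf) -(fineK fH) -(fineK (fin_num_centropy g fH)).
by rewrite -EFinB lee_fin subr_ge0 -lee_fin !fineK ?centropy_le_entropy ?fin_num_centropy.
Qed.

End EntropyInequalities.

Section DataProcessing.
Variables (R : realType) (T1 T2 T3 : choiceType) (Q : T1 * T2 * T3 -> R).
Hypothesis Qpmf : is_pmf Q.
Let Q0 : forall w, 0 <= Q w := Qpmf.1.
Hypothesis Qmarkov : Defs.markov Q.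

Lemma markov_centropy :
  centropy Q (fun w => w.1.1) (fun w => w.1.2) =
  centropy Q (fun w => w.1.1) (fun w => (w.1.2, w.2)).
Proof.
apply: eq_esum => -[[a b] c] _ /=; congr EFin.
have [->|Qwn] := eqVneq (Q (a, b, c)) 0; first by rewrite !mul0r.
have Qp : 0 < Q (a, b, c) by rewrite lt_def Qwn Q0.
have pab := atom_gt0 Qpmf (fun w => (w.1.1, w.1.2)) Qp.
have -> : atom Q (fun w => w.1.2) (a, b, c) = psum (fun ac : T1 * T3 => Q (ac.1, b, ac.2)).
  apply: (@law_param _ _ Q _ _ _ (fun b ac => (ac.1, b, ac.2))) => //.
  - by move=> [a' c'] [a'' c''] /= [-> ->].
  - by move=> [[a' b'] c'] /= <-; exists (a', c').
have eab : atom Q (fun w => (w.1.1, w.1.2)) (a, b, c) = psum (fun c' => Q (a, b, c')).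
  apply: (@law_param _ _ Q _ _ _ (fun ab c => (ab, c))) => //.
  - by move=> c' c'' [].
  - by move=> [[a' b'] c'] /= <-; exists c'.
have -> : atom Q (fun w => (w.1.2, w.2)) (a, b, c) = psum (fun a' => Q (a', b, c)).
  apply: (@law_param _ _ Q _ _ _ (fun bc a => (a, bc.1, bc.2))) => //.
  - by move=> a' a'' [].
  - by move=> [[a' b'] c'] /= [<- <-]; exists a'.
have -> : atom Q (fun w => (w.1.1, (w.1.2, w.2))) (a, b, c) = Q (a, b, c).
  rewrite -(atom_id Qpmf); apply: eq_atom => -[[a' b'] c'] /=.
  by rewrite !xpair_eqE andbA.
rewrite eab in pab *; congr (_ * log2 _).
apply: (@mulfI _ (Q (a, b, c))); first by rewrite gt_eqF.
apply: (@mulIf _ (psum (fun c' => Q (a, b, c')))); first by rewrite gt_eqF.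
by rewrite mulrA Qmarkov; field; rewrite !gt_eqF.
Qed.

Lemma markov_centropy_le :
  (centropy Q (fun w => w.1.1) (fun w => w.1.2) <=
   centropy Q (fun w => w.1.1) (fun w => w.2))%E.
Proof. by rewrite markov_centropy; exact: centropy_pair_le. Qed.

End DataProcessing.

Fixpoint words (A : finType) (k : nat) : seq (seq A) :=
  if k is k'.+1 then [seq rcons s a | s <- words A k', a <- enum A] else [:: [::]].

Lemma mem_words (A : finType) k (s : seq A) : (s \in words A k) = (size s == k).
Proof.
elim: k s => [|k IH] s /=; first by rewrite inE size_eq0.
apply/allpairsP/idP => [[[s' a] [hs _ ->]]|]; first by rewrite size_rcons eqSS -IH.
case/lastP: s => [//|s' a]; rewrite size_rcons eqSS -IH => hs.
by exists (s', a); rewrite mem_enum.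
Qed.

Lemma uniq_words (A : finType) k : uniq (words A k).
Proof.
elim: k => [//|k IH] /=; rewrite allpairs_uniq ?enum_uniq //.
by move=> [s a] [s' a'] _ _ /= /rcons_inj.
Qed.

Lemma finite_size_eq (A : finType) n : finite_set [set x : seq A | size x = n].
Proof.
suff -> : [set x : seq A | size x = n] = [set` words A n] by exact: finite_seq.
by apply/seteqP; split => x /=; rewrite mem_words => /eqP.
Qed.

Lemma fin_num_ent (R : realType) (T : choiceType) (p : T -> R) (S : set T) :
  finite_set S -> (forall t, ~ S t -> p t = 0) -> (forall t, 0 <= p t <= 1) ->
  ent p \is a fin_num.
Proof.
move=> fS p0 p01; set c0 := (ln (2:R))^-1.
have c00 : 0 <= c0 by rewrite invr_ge0 ltW ?ln2_gt0.
have term_le t : - (p t * log2 (p t)) <= if t \in S then c0 else 0.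
  case: ifPn => [_|/negP tS]; first by rewrite entropy_term_le //; case/andP: (p01 t).
  by rewrite p0 ?mul0r ?oppr0 // => St; apply: tS; exact: mem_set.
rewrite ge0_fin_numE; last first.
  by apply: esum_ge0 => t _; rewrite lee_fin entropy_term_ge0 //; case/andP: (p01 t).
apply: (@le_lt_trans _ _ (\esum_(t in [set: T]) (if t \in S then c0 else 0)%:E)).
  by apply: le_esum => t _; rewrite lee_fin.
rewrite -(@eq_esum _ _ _ (fun t => if t \in S then c0%:E else 0)%E); last first.
  by move=> t _; case: ifP.
by rewrite -esum_mkcond esum_fset // ?fsumEFin ?ltry // => t _; rewrite lee_fin.
Qed.

Section Process.
Variables (R : realType) (A : finType) (X : process R A).

Lemma px_le1 s : px X s <= 1.
Proof.
elim/last_ind: s => [|s a IH]; first by rewrite px_nil.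
apply: le_trans IH; rewrite [leRHS](px_cons X s) (bigD1 a) //= lerDl.
by apply: sumr_ge0 => i _; exact: px_ge0.
Qed.

Lemma px_extensions k s : \sum_(y <- words A k) px X (s ++ y) = px X s.
Proof.
elim: k s => [|k IH] s /=; first by rewrite big_seq1 cats0.
rewrite big_allpairs_dep -IH; apply: eq_bigr => y _ /=.
rewrite big_enum /= (px_cons X (s ++ y)); apply: eq_bigr => a _.
by rewrite rcons_cat.
Qed.

Lemma pXn_ge0 n x : 0 <= pXn X n x.
Proof. by rewrite /pXn; case: ifP => _ //; exact: px_ge0. Qed.

Lemma pXn_le1 n x : pXn X n x <= 1.
Proof. by rewrite /pXn; case: ifP => _ //; exact: px_le1. Qed.

Lemma pXn_size n x : pXn X n x != 0 -> size x = n.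
Proof. by rewrite /pXn; case: (size x =P n) => //; rewrite eqxx. Qed.

Lemma pXn_sum1 n : \esum_(x in [set: seq A]) (pXn X n x)%:E = 1%E.
Proof.
have -> : \esum_(x in [set: seq A]) (pXn X n x)%:E =
          \esum_(x in [set` words A n]) (px X x)%:E.
  rewrite [RHS]esum_mkcond; apply: eq_esum => x _; by rewrite /pXn mem_setE mem_words; case: ifP.
rewrite esum_fset => [|//|x _]; [|exact: finite_seq|by rewrite lee_fin px_ge0].
by rewrite -fsbig_seq ?uniq_words // sumEFin -(px_nil X) -(px_extensions n [::]).
Qed.

Lemma fin_num_ent_pXn n : ent (pXn X n) \is a fin_num.
Proof.
apply: (@fin_num_ent _ _ _ [set x : seq A | size x = n]); first exact: finite_size_eq.
  by move=> x /= sx; rewrite /pXn; case: eqP.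
by move=> x; rewrite pXn_ge0 pXn_le1.
Qed.

End Process.

Lemma law_pairE (R : realType) (T U : choiceType) (Q : T * U -> R) : is_pmf Q ->
  law Q (fun w => (w.1, w.2)) = Q.
Proof.
move=> Qpmf; have -> : (fun w : T * U => (w.1, w.2)) = id by apply: funext => -[].
by apply: funext => w; exact: atom_id Qpmf w.
Qed.

Section Channel.
Variables (R : realType) (A : finType) (O : choiceType).
Variables (X : process R A) (Zs : channel R A O).

Lemma chan_le1 x z : chan Zs x z <= 1.
Proof.
rewrite -lee_fin -(chan_sum1 Zs x).
by apply: le_term_esumT => z'; rewrite lee_fin chan_ge0.
Qed.

Lemma indep_out_ge0 xs s : 0 <= indep_out Zs xs s.
Proof. by rewrite /indep_out; case: ifP => // _; apply: prodr_ge0 => i _; exact: chan_ge0. Qed.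

Lemma joint_n_ge0 n xz : 0 <= joint_n X Zs n xz.
Proof. by rewrite /joint_n mulr_ge0 ?pXn_ge0 ?chan_ge0. Qed.

Lemma esum_joint_n_out n x :
  \esum_(z in [set: O]) (joint_n X Zs n (x, z))%:E = (pXn X n x)%:E.
Proof.
rewrite /joint_n /=; under eq_esum do rewrite EFinM.
by rewrite ge0_esumZl ?pXn_ge0 ?chan_sum1 ?mule1 // => z; rewrite lee_fin chan_ge0.
Qed.

Lemma psum_joint_n_out n x : psum (fun z => joint_n X Zs n (x, z)) = pXn X n x.
Proof. by rewrite /psum esum_joint_n_out. Qed.

Lemma joint_n_pmf n : is_pmf (joint_n X Zs n).
Proof.
split=> [xz|]; first exact: joint_n_ge0.
rewrite esumT_pair; last by move=> q; rewrite lee_fin joint_n_ge0.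
by under eq_esum do rewrite esum_joint_n_out; exact: pXn_sum1.
Qed.

Lemma esum_joint_n_in n z :
  \esum_(x in [set: seq A]) (joint_n X Zs n (x, z))%:E =
  (psum (fun x => joint_n X Zs n (x, z)))%:E.
Proof.
rewrite /psum fineK //; apply: esum_le1_fin_num => [x|].
  by rewrite lee_fin joint_n_ge0.
rewrite -(pXn_sum1 X n); apply: le_esum => x _; rewrite lee_fin /joint_n /=.
by rewrite ler_piMr ?pXn_ge0 ?chan_le1.
Qed.

Lemma joint_n_le_out n x z :
  joint_n X Zs n (x, z) <= psum (fun x => joint_n X Zs n (x, z)).
Proof.
rewrite -lee_fin -esum_joint_n_in.
by apply: le_term_esumT => x'; rewrite lee_fin joint_n_ge0.
Qed.

Section Coupled.
Variables (W : choiceType) (Q : W -> R) (n : nat) (xf : W -> seq A) (zf : W -> O).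
Hypothesis Qpmf : is_pmf Q.
Hypothesis Qjoint : law Q (fun w => (xf w, zf w)) = joint_n X Zs n.

Lemma law_input : law Q xf = pXn X n.
Proof.
apply: funext => x; apply/eqP; rewrite -(@eqe R) -(esum_law_pair2 Qpmf xf zf) Qjoint.
exact/eqP/esum_joint_n_out.
Qed.

Lemma entropy_input : entropy Q xf = ent (pXn X n).
Proof. by rewrite -law_input (ent_law Qpmf). Qed.

Lemma fin_num_entropy_input : entropy Q xf \is a fin_num.
Proof. by rewrite entropy_input fin_num_ent_pXn. Qed.

End Coupled.

Lemma fin_num_mi_joint_n n : mi (joint_n X Zs n) \is a fin_num.
Proof.
have Jpmf := joint_n_pmf n; rewrite -(law_pairE Jpmf) fin_num_mi_law //.
exact: fin_num_entropy_input (law_pairE Jpmf).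
Qed.

Lemma mi_joint_n_ge0 n : (0 <= mi (joint_n X Zs n))%E.
Proof.
have Jpmf := joint_n_pmf n; rewrite -(law_pairE Jpmf) mi_law_ge0 //.
exact: fin_num_entropy_input (law_pairE Jpmf).
Qed.

Lemma fin_num_cent_joint_n n : cent (joint_n X Zs n) \is a fin_num.
Proof.
have Jpmf := joint_n_pmf n; rewrite -(law_pairE Jpmf) (cent_law Jpmf) fin_num_centropy //.
exact: fin_num_entropy_input (law_pairE Jpmf).
Qed.

End Channel.

Section Couplings.
Variables (R : realType) (A : finType) (O : choiceType).
Variables (X : process R A) (Zs : channel R A O).

Definition joint_split (n m : nat) (xs : seq A * seq O) : R :=
  pXn X n xs.1 * indep_out Zs [:: take m xs.1; drop m xs.1] xs.2.

Lemma mi_merge_le n m : merge_coupling X Zs n m ->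
  (mi (joint_n X Zs n) <= mi (joint_split n m))%E.
Proof.
move=> [Q [Qpmf [Qsplit [Qjoint Qmarkov]]]].
have lawXS : law Q (fun w => (w.1.1, w.1.2)) = joint_split n m.
  apply: funext => -[x s]; rewrite (@law_param _ _ Q _ _ _ (fun xs z => (xs, z))) //.
  - by move=> z z' [].
  - by move=> [[x' s'] z] /= <-; exists z.
have lawXZ : law Q (fun w => (w.1.1, w.2)) = joint_n X Zs n.
  apply: funext => -[x z]; rewrite (@law_param _ _ Q _ _ _ (fun xz s => (xz.1, s, xz.2))) //.
  - by move=> s s' [].
  - by move=> [[x' s'] z'] /= [<- <-]; exists s'.
rewrite -lawXS -lawXZ !(mi_law Qpmf) leeB //.
exact: markov_centropy_le.
Qed.

Lemma mi_refine_le n k g :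
  refine_coupling X Zs n (fun x => [:: take k x; drop k x]) g ->
  (mi (joint_split n k) <= mi (joint_n X Zs n) + g%:E)%E.
Proof.
move=> [Q [Qpmf [Qjoint [Qsplit [Qmarkov HW]]]]].
have lawXZ : law Q (fun w => (w.1.1, w.1.2.1)) = joint_n X Zs n.
  apply: funext => -[x z].
  rewrite (@law_param _ _ Q _ _ _ (fun xz (ws : nat * seq O) => (xz.1, (xz.2, ws.1), ws.2))) //.
  - by move=> [a b] [a' b'] [-> ->].
  - by move=> [[x' [z' w]] s] /= [<- <-]; exists (w, s).
have lawXS : law Q (fun w => (w.1.1, w.2)) = joint_split n k.
  apply: funext => -[x s].
  rewrite (@law_param _ _ Q _ _ _ (fun xs (zw : O * nat) => (xs.1, zw, xs.2))) //.
  - by move=> a b [].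
  - by move=> [[x' zw] s'] /= [<- <-]; exists zw.
have lawW : law Q (fun w => w.1.2.2) =
    (fun w => psum (fun r : seq A * O * seq O => Q (r.1.1, (r.1.2, w), r.2))).
  apply: funext => w.
  rewrite (@law_param _ _ Q _ _ _ (fun w (r : seq A * O * seq O) => (r.1.1, (r.1.2, w), r.2))) //.
  - by move=> [[a b] c] [[a' b'] c'] /= [-> -> ->].
  - by move=> [[x' [z' w']] s] /= ->; exists (x', z', s).
rewrite -lawW (ent_law Qpmf) in HW.
have fH := fin_num_entropy_input Qpmf lawXZ.
have fHW : entropy Q (fun w => w.1.2.2) \is a fin_num.
  exact: ge0_le_fin_num (entropy_ge0 Qpmf _) HW _.
(* conditioning on the extra information [W] costs at most [H(W)] *)
have centropy_le : (centropy Q (fun w => w.1.1) (fun w => w.1.2.1) <=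
    centropy Q (fun w => w.1.1) (fun w => w.2) + entropy Q (fun w => w.1.2.2))%E.
  apply: le_trans (centropy_chain_le Qpmf _ _ (fun w => w.1.2.2)) _.
  apply: leeD; last exact: centropy_le_entropy.
  exact: (markov_centropy_le Qpmf Qmarkov).
move: centropy_le HW; rewrite -lawXS -lawXZ !(mi_law Qpmf).
rewrite -(fineK fH) -(fineK fHW) -(fineK (fin_num_centropy Qpmf (fun w => w.2) fH)).
rewrite -(fineK (fin_num_centropy Qpmf (fun w => w.1.2.1) fH)).
by rewrite -!EFinB -!EFinD !lee_fin; lra.
Qed.

End Couplings.

Section IndependentSplit.
Variables (R : realType) (A : finType) (O : choiceType).
Variables (X : process R A) (Zs : channel R A O) (n m : nat).
Hypothesis mn : (m <= n)%N.
Hypothesis pXn_split : forall x,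
  pXn X n x = pXn X m (take m x) * pXn X (n - m) (drop m x).

Local Notation J1 := (joint_n X Zs m).
Local Notation J2 := (joint_n X Zs (n - m)).
Let prefix_m := [set xy : seq A * seq A | size xy.1 = m].

Lemma pXn_split_cat x1 x2 : size x1 = m ->
  pXn X n (x1 ++ x2) = pXn X m x1 * pXn X (n - m) x2.
Proof. by move=> sx; rewrite pXn_split (take_size_cat _ sx) (drop_size_cat _ sx). Qed.

Lemma pXn_eq0 k x : size x <> k -> pXn X k x = 0.
Proof. by rewrite /pXn; case: (size x =P k). Qed.

Lemma cat_prefix_inj : {in prefix_m &, injective (fun xy : seq A * seq A => xy.1 ++ xy.2)}.
Proof.
move=> [a b] [a' b'] /set_mem sa /set_mem sa' e; rewrite /prefix_m /= in sa sa' e.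
have := congr1 (take m) e; rewrite (take_size_cat _ sa) (take_size_cat _ sa') => ->.
by have := congr1 (drop m) e; rewrite (drop_size_cat _ sa) (drop_size_cat _ sa') => ->.
Qed.

Lemma cat_prefix_onto x : pXn X n x != 0 -> exists2 xy, prefix_m xy & xy.1 ++ xy.2 = x.
Proof.
move=> /pXn_size sx; exists (take m x, drop m x); last exact: cat_take_drop.
by rewrite /prefix_m /= size_takel // sx.
Qed.

Lemma ent_pXn_split : ent (pXn X n) = (ent (pXn X m) + ent (pXn X (n - m)))%E.
Proof.
have H0 k x : 0 <= - (pXn X k x * log2 (pXn X k x)).
  by rewrite entropy_term_ge0 ?pXn_ge0 ?pXn_le1.
rewrite /ent (@reindex_esum_mkcond _ _ _ prefix_m (fun xy => xy.1 ++ xy.2) _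
   (fun xy => (pXn X (n - m) xy.2 * - (pXn X m xy.1 * log2 (pXn X m xy.1)) +
               pXn X m xy.1 * - (pXn X (n - m) xy.2 * log2 (pXn X (n - m) xy.2)))%:E)).
- rewrite (eq_esum (fun xy _ => EFinD _ _)) esumD; last 2 first.
  + by move=> xy _; rewrite lee_fin mulr_ge0 ?pXn_ge0.
  + by move=> xy _; rewrite lee_fin mulr_ge0 ?pXn_ge0.
  congr (_ + _)%E.
  + under eq_esum do rewrite mulrC.
    by apply: esumT_mul_pmfr => [x|x|]; rewrite ?pXn_ge0 ?pXn_sum1.
  + by apply: esumT_mul_pmfl => [x|x|]; rewrite ?pXn_ge0 ?pXn_sum1.
- exact: cat_prefix_inj.
- move=> x hx; apply: cat_prefix_onto; apply: contra hx => /eqP ->.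
  by rewrite mul0r oppr0.
- by move=> [x1 x2] /= sx; rewrite pXn_split_cat // entropy_termM ?pXn_ge0.
- move=> [x1 x2] /= nD; rewrite (@pXn_eq0 m x1) //.
  by rewrite !(mul0r, mulr0, oppr0, addr0).
Qed.

Lemma indep_out2 y1 y2 z1 z2 :
  indep_out Zs [:: y1; y2] [:: z1; z2] = chan Zs y1 z1 * chan Zs y2 z2.
Proof. by rewrite /indep_out /= !big_cons big_nil mulr1. Qed.

Lemma indep_out2_sum1 y1 y2 :
  \esum_(s in [set: seq O]) (indep_out Zs [:: y1; y2] s)%:E = 1%E.
Proof.
rewrite (@reindex_esum_mkcond _ _ _ setT (fun zz : O * O => [:: zz.1; zz.2]) _
   (fun zz => (chan Zs y1 zz.1 * chan Zs y2 zz.2)%:E)).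
- rewrite -(chan_sum1 Zs y1).
  by apply: esumT_mul_pmfr => [z|z|]; rewrite ?chan_ge0 ?chan_sum1.
- by move=> [a b] [a' b'] _ _ /= [-> ->].
- move=> s; rewrite /indep_out; case: s => [|a [|b [|c s]]] //=; rewrite ?eqxx //.
  by move=> _; exists (a, b).
- by move=> [a b] _; rewrite indep_out2.
- by move=> t [].
Qed.

Lemma joint_split_cat x1 x2 z1 z2 : size x1 = m ->
  joint_split X Zs n m (x1 ++ x2, [:: z1; z2]) = J1 (x1, z1) * J2 (x2, z2).
Proof.
move=> sx; rewrite /joint_split /= pXn_split_cat // (take_size_cat _ sx).
by rewrite (drop_size_cat _ sx) indep_out2 /joint_n /=; ring.
Qed.

Lemma psum_joint_split z1 z2 :
  psum (fun x => joint_split X Zs n m (x, [:: z1; z2])) =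
  psum (fun x => J1 (x, z1)) * psum (fun x => J2 (x, z2)).
Proof.
rewrite /psum (@reindex_esum_mkcond _ _ _ prefix_m (fun xy => xy.1 ++ xy.2) _
   (fun xy => (J1 (xy.1, z1) * J2 (xy.2, z2))%:E)).
- rewrite esumT_pair /=; last by move=> p; rewrite lee_fin mulr_ge0 ?joint_n_ge0.
  have inner x1 : \esum_(x2 in [set: seq A]) (J1 (x1, z1) * J2 (x2, z2))%:E =
      ((J1 (x1, z1))%:E * (psum (fun x => J2 (x, z2)))%:E)%E.
    under eq_esum do rewrite EFinM.
    by rewrite ge0_esumZl ?joint_n_ge0 ?esum_joint_n_in // => x; rewrite lee_fin joint_n_ge0.
  under eq_esum do rewrite inner.
  rewrite ge0_esumZr ?esum_joint_n_in -?EFinM //; last by move=> x; rewrite lee_fin joint_n_ge0.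
  by rewrite fine_ge0 // esum_ge0 // => x _; rewrite lee_fin joint_n_ge0.
- exact: cat_prefix_inj.
- move=> x hx; apply: cat_prefix_onto; apply: contra hx => /eqP.
  by rewrite /joint_split => ->; rewrite mul0r.
- by move=> [x1 x2] /= sx; rewrite joint_split_cat.
- by move=> [x1 x2] /= nD; rewrite /joint_n /= pXn_eq0 ?mul0r.
Qed.

Lemma joint_split_support x s : joint_split X Zs n m (x, s) != 0 ->
  size x = n /\ exists z1 z2, s = [:: z1; z2].
Proof.
rewrite /joint_split /= => J0; split.
  by apply: (pXn_size (X := X)); apply: contra J0 => /eqP ->; rewrite mul0r.
have : indep_out Zs [:: take m x; drop m x] s != 0.
  by apply: contra J0 => /eqP ->; rewrite mulr0.
rewrite /indep_out; case: s {J0} => [|a [|b [|c s]]] //=; rewrite ?eqxx // => _.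
by exists a, b.
Qed.

Lemma cent_joint_split :
  cent (joint_split X Zs n m) = (cent J1 + cent J2)%E.
Proof.
have term_ge0 k p :
    0 <= joint_n X Zs k p * log2 (psum (fun t => joint_n X Zs k (t, p.2)) / joint_n X Zs k p).
  case: p => x z; rewrite mulr_ge0 ?joint_n_ge0 // log2_ratio_ge0 ?joint_n_ge0 //.
  exact: joint_n_le_out.
rewrite /cent (@reindex_esum_mkcond _ _ _ [set p : (seq A * O) * (seq A * O) | size p.1.1 = m]
   (fun p => (p.1.1 ++ p.2.1, [:: p.1.2; p.2.2])) _
   (fun p => (J2 p.2 * (J1 p.1 * log2 (psum (fun t => J1 (t, p.1.2)) / J1 p.1)) +
              J1 p.1 * (J2 p.2 * log2 (psum (fun t => J2 (t, p.2.2)) / J2 p.2)))%:E)).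
- rewrite (eq_esum (fun xy _ => EFinD _ _)) esumD; last 2 first.
  + by move=> p _; rewrite lee_fin mulr_ge0 ?joint_n_ge0.
  + by move=> p _; rewrite lee_fin mulr_ge0 ?joint_n_ge0.
  congr (_ + _)%E.
  + under eq_esum do rewrite mulrC.
    by apply: esumT_mul_pmfr => [q|q|]; rewrite ?joint_n_ge0 ?(joint_n_pmf X Zs _).2.
  + by apply: esumT_mul_pmfl => [q|q|]; rewrite ?joint_n_ge0 ?(joint_n_pmf X Zs _).2.
- move=> [[a z] [b z']] [[a' y] [b' y']] /set_mem sa /set_mem sa' /= [e -> ->].
  by have [-> ->] := @cat_prefix_inj (a, b) (a', b') (mem_set sa) (mem_set sa') e.
- move=> [x s] hx.
  have [sx [z1 [z2 ->]]] : size x = n /\ exists z1 z2, s = [:: z1; z2].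
    by apply: joint_split_support; apply: contra hx => /eqP ->; rewrite mul0r.
  exists ((take m x, z1), (drop m x, z2)); last by rewrite /= cat_take_drop.
  by rewrite /= size_takel // sx.
- move=> [[x1 z1] [x2 z2]] /= sx; rewrite psum_joint_split joint_split_cat //.
  by rewrite centropy_termM ?joint_n_ge0 // joint_n_le_out.
- move=> [[x1 z1] [x2 z2]] /= nD.
  by rewrite [J1 _]/joint_n /= pXn_eq0 // !(mul0r, mulr0, addr0).
Qed.

Lemma mi_joint_split :
  mi (joint_split X Zs n m) = (mi J1 + mi J2)%E.
Proof.
rewrite /mi; have -> : (fun t => psum (fun u => joint_split X Zs n m (t, u))) = pXn X n.
  apply: funext => t; rewrite /psum /joint_split /=; under eq_esum do rewrite EFinM.
  rewrite ge0_esumZl ?pXn_ge0 ?indep_out2_sum1 ?mule1 //.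
  by move=> u; rewrite lee_fin indep_out_ge0.
rewrite !(funext (psum_joint_n_out X Zs _)) ent_pXn_split cent_joint_split.
have e1 := fin_num_ent_pXn X m; have e2 := fin_num_ent_pXn X (n - m).
have c1 := fin_num_cent_joint_n X Zs m; have c2 := fin_num_cent_joint_n X Zs (n - m).
rewrite -(fineK e1) -(fineK e2) -(fineK c1) -(fineK c2).
by rewrite fin_num_oppeD // addeACA.
Qed.

End IndependentSplit.

Section Blocks.
Variable A : finType.
Implicit Types (s x y : seq A).

Lemma block_take b i m s : (i * b + b <= m)%N -> block b i (take m s) = block b i s.
Proof. by move=> ibm; rewrite /block !take_drop take_takel // addnC. Qed.

Lemma block_drop b u i s : block b (u + i) s = block b i (drop (u * b) s).
Proof. by rewrite /block drop_drop mulnDl addnC. Qed.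

Lemma drop_cat_le m x y : (m <= size x)%N -> drop m (x ++ y) = drop m x ++ y.
Proof.
rewrite drop_cat; case: ltnP => // h1 h2.
have -> : m = size x by apply/eqP; rewrite eqn_leq h1 h2.
by rewrite drop_size subnn drop0.
Qed.

End Blocks.

Section BlockIndependence.
Variables (R : realType) (A : finType) (X : process R A) (b : nat).
Hypothesis b0 : (0 < b)%N.
Hypothesis Xblock : forall (t : nat) (x : seq A), (0 < t)%N -> size x = (t * b)%N ->
  px X x = \prod_(i < t) px X (block b i x).

Lemma prod_blocks_split u t x y : (u < t)%N -> (u * b <= size x)%N ->
  \prod_(i < t) px X (block b i (x ++ y)) =
  \prod_(i < u) px X (block b i (take (u * b) x)) *
  \prod_(i < t - u) px X (block b i (drop (u * b) x ++ y)).
Proof.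
move=> ut ux.
have -> : \prod_(i < t) px X (block b i (x ++ y)) =
          \prod_(0 <= i < t) px X (block b i (x ++ y)) by rewrite big_mkord.
rewrite (big_cat_nat (leq0n u) (ltnW ut)) /=; congr (_ * _).
- rewrite big_mkord; apply: eq_bigr => i _.
  rewrite -(takel_cat y ux) block_take //.
  by rewrite -mulSnr leq_mul2r ltn_ord orbT.
- rewrite -{1}(add0n u) big_addn big_mkord; apply: eq_bigr => i _.
  by rewrite addnC block_drop drop_cat_le.
Qed.
(* Pad [x] to a whole number [t] of blocks, apply block independence to the
   padded word and to the padded suffix, and sum the padding out. *)
Lemma px_split_block u x : (0 < u)%N -> (u * b <= size x)%N ->
  px X x = px X (take (u * b) x) * px X (drop (u * b) x).
Proof.
move=> u0 ux; set m := (u * b)%N in ux *.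
set t := (size x).+1; set k := (t * b - size x)%N.
have xt : (size x < t * b)%N by rewrite (leq_trans (ltnSn _)) // leq_pmulr.
have ut : (u < t)%N by rewrite -(ltn_pmul2r b0); apply: leq_ltn_trans xt.
rewrite -(px_extensions X k x) -(px_extensions X k (drop m x)) big_distrr /=.
rewrite big_seq [RHS]big_seq; apply: eq_bigr => y; rewrite mem_words => /eqP sy.
rewrite (@Xblock t (x ++ y)) ?size_cat ?sy /k //; last by lia.
rewrite (@Xblock u (take m x)) ?size_takel //.
rewrite (@Xblock (t - u) (drop m x ++ y)) ?subn_gt0 //; last first.
  by rewrite size_cat size_drop sy /k mulnBl -/m; lia.
exact: prod_blocks_split.
Qed.

Lemma pXn_split_block u n x : (0 < u)%N -> (u * b <= n)%N ->
  pXn X n x = pXn X (u * b) (take (u * b) x) * pXn X (n - u * b) (drop (u * b) x).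
Proof.
move=> u0 un; rewrite /pXn size_drop.
have [sx|nsx] := eqVneq (size x) n.
  rewrite size_takel ?sx // !eqxx; apply: px_split_block => //.
  by rewrite sx.
case: ifP => [/eqP|_]; last by rewrite mul0r.
rewrite size_take; case: ltnP => [ubx _|xub <-].
all: case: eqP => [sd|_]; last by rewrite mulr0.
all: by case/eqP: nsx; lia.
Qed.

End BlockIndependence.

Section AlmostSubadditive.
Variable R : realType.

Lemma little_o_idP (g : nat -> R) : little_o_id g ->
  forall e : R, 0 < e -> \forall n \near \oo, `|g n| <= e * n%:R.
Proof.
move=> /cvgrPdist_le go e e0; near=> n.
have n0 : (0 : R) < n%:R by rewrite ltr0n; near: n; exists 1%N.
suff : `|0 - g n / n%:R| <= e by rewrite sub0r normrN normrM normfV normr_nat ler_pdivrMr.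
by near: n; exact: go.
Unshelve. all: by end_near. Qed.

Lemma eventually_le_mul_nat (c e : R) : 0 < e -> \forall n \near \oo, c <= e * n%:R.
Proof.
move=> e0; near=> n; rewrite -ler_pdivrMl //.
by near: n; exact: nbhs_infty_ger.
Unshelve. all: by end_near. Qed.

Variables (a : nat -> R) (b : nat) (g : nat -> nat -> R).
Hypothesis b0 : (0 < b)%N.
Hypothesis a_ge0 : forall n, (0 < n)%N -> 0 <= a n.
Hypothesis a_subadd : forall u n, (0 < u)%N -> (u * b < n)%N ->
  a n <= a (u * b) + a (n - u * b).
Hypothesis g_small : forall r, (0 < r)%N -> (r < b)%N -> little_o_id (g r).
Hypothesis a_superadd : forall r t, (0 < r)%N -> (r < b)%N -> (0 < t)%N ->
  a (t * b) + a r <= a (t * b + r) + g r (t * b + r).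

Let block_rates := [set a (k * b) / (k * b)%:R | k in [set k | (0 < k)%N]].
Let rate_inf := inf block_rates.

Lemma block_rates_lb : lbound block_rates 0.
Proof. by move=> _ [k /= k0 <-]; rewrite divr_ge0 // a_ge0 // muln_gt0 k0. Qed.

Lemma rate_inf_ge0 : 0 <= rate_inf.
Proof. by apply: lb_le_inf; [exists (a (1 * b) / (1 * b)%:R), 1%N | exact: block_rates_lb]. Qed.

Lemma rate_inf_le k : (0 < k)%N -> rate_inf <= a (k * b) / (k * b)%:R.
Proof. by move=> k0; apply: ge_inf; [exists 0; exact: block_rates_lb | exists k]. Qed.

Lemma subadd_multiple_bound d : (0 < d)%N ->
  (forall n, (d < n)%N -> a n <= a d + a (n - d)) ->
  forall n, (0 < n)%N -> a n <= (n %/ d)%:R * a d + \sum_(s < d) `|a s|.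
Proof.
move=> d0 a_subd; elim/ltn_ind => n IH n0.
have [nd|dn] := ltnP n d.
  rewrite divn_small // mul0r add0r; apply: le_trans (ler_norm _) _.
  by rewrite (bigD1 (Ordinal nd)) //= lerDl sumr_ge0.
have [->|dlt] := eqVneq n d; first by rewrite divnn d0 mul1r lerDl sumr_ge0.
have dn' : (d < n)%N by rewrite ltn_neqAle eq_sym dlt dn.
apply: le_trans (a_subd _ dn') _.
have := IH (n - d)%N; rewrite ltn_subrL d0 n0 subn_gt0 dn' => /(_ isT isT) h.
apply: le_trans (lerD (lexx _) h) _; rewrite addrA lerD2r.
have -> : (n %/ d)%N = ((n - d) %/ d).+1.
  by rewrite divnBr ?dvdnn // divnn d0 subn1 prednK // divn_gt0.
by rewrite -addn1 natrD mulrDl mul1r addrC.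
Qed.

Lemma superadd_lower_bound n : (b < n)%N ->
  rate_inf * n%:R - rate_inf * b%:R - (if (n %% b == 0)%N then 0 else `|g (n %% b) n|) <= a n.
Proof.
move=> bn; set t := (n %/ b)%N; set r := (n %% b)%N.
have en : n = (t * b + r)%N by rewrite /t /r -divn_eq.
have t0 : (0 < t)%N by rewrite /t divn_gt0 // ltnW.
have rb : (r < b)%N by rewrite /r ltn_pmod.
have hl : rate_inf * (t * b)%:R <= a (t * b).
  by have := rate_inf_le t0; rewrite ler_pdivlMr // ltr0n muln_gt0 t0.
have lg0 := rate_inf_ge0.
have nR : n%:R = (t * b)%:R + r%:R :> R by rewrite en natrD.
have rbR : r%:R <= b%:R :> R by rewrite ler_nat ltnW.
case: eqP => [r0|/eqP rn0].
  rewrite subr0; move: hl; rewrite -/r r0 addn0 in en; rewrite en => hl.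
  by apply: le_trans hl; rewrite lerBlDr lerDl mulr_ge0.
have r0 : (0 < r)%N by rewrite lt0n.
have := a_superadd r0 rb t0; rewrite -en => h.
have ar := a_ge0 r0; have gn := ler_norm (g r n).
move: h; rewrite -/r nR; nra.
Qed.

Lemma g_uniformly_small e : 0 < e ->
  \forall n \near \oo, forall r, (0 < r)%N -> (r < b)%N -> `|g r n| <= e * n%:R.
Proof.
move=> e0; suff : forall B, \forall n \near \oo,
    forall r, (0 < r)%N -> (r < b)%N -> (r < B)%N -> `|g r n| <= e * n%:R.
  by move=> /(_ b); apply: filterS => n h r r0 rb; exact: h.
elim => [|B IH]; first by near=> n => r.
have [/andP[B0 Bb]|nB] := boolP ((0 < B)%N && (B < b)%N).
  have := little_o_idP (g_small B0 Bb) e0; move: IH; apply: filterS2 => n IH hB r r0 rb.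
  by rewrite ltnS leq_eqVlt => /orP[/eqP ->|]; [exact: hB|exact: IH].
move: IH; apply: filterS => n IH r r0 rb; rewrite ltnS leq_eqVlt => /orP[/eqP rB|]; last exact: IH.
by move: nB; rewrite -rB r0 rb.
Unshelve. all: by end_near. Qed.

Lemma eventually_rate_le e : 0 < e -> \forall n \near \oo, a n.+1 / n.+1%:R <= rate_inf + e.
Proof.
move=> e0; have e20 : 0 < e / 2 by rewrite divr_gt0.
have lam_inf : has_inf block_rates.
  by split; [exists (a (1 * b) / (1 * b)%:R), 1%N | exists 0; exact: block_rates_lb].
have [_ [K /= K0 <-] hK] := inf_adherent e20 lam_inf.
set d := (K * b)%N in hK; have d0 : (0 < d)%N by rewrite muln_gt0 K0.
have d0R : (0 : R) < d%:R by rewrite ltr0n.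
have ad : a d <= (rate_inf + e / 2) * d%:R by rewrite -ler_pdivrMr // ltW.
set M := \sum_(s < d) `|a s|.
near=> n; have n0 : (0 : R) < n.+1%:R by rewrite ltr0n.
rewrite ler_pdivrMr //.
have := subadd_multiple_bound d0 (fun m => a_subadd K0) (ltn0Sn n); rewrite -/M => hub.
have hq : (n.+1 %/ d)%:R * d%:R <= n.+1%:R :> R by rewrite -natrM ler_nat leq_divM.
have hM : M <= e / 2 * n.+1%:R.
  apply: le_trans (_ : e / 2 * n%:R <= _); last by rewrite ler_wpM2l ?ler_nat // ltW.
  by near: n; exact: eventually_le_mul_nat.
have := a_ge0 d0; have := rate_inf_ge0; have q0 : (0 : R) <= (n.+1 %/ d)%:R by [].
nra.
Unshelve. all: by end_near. Qed.

Lemma eventually_rate_ge e : 0 < e -> \forall n \near \oo, rate_inf - e <= a n.+1 / n.+1%:R.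
Proof.
move=> e0; have e40 : 0 < e / 4 by rewrite divr_gt0.
move: (g_uniformly_small e40) => -[N _ gN].
near=> n; have n0 : (0 : R) < n.+1%:R by rewrite ltr0n.
rewrite ler_pdivlMr //.
have bn : (b < n.+1)%N by near: n; exists b.
have hlb := superadd_lower_bound bn.
have hb : rate_inf * b%:R <= e / 4 * n.+1%:R.
  apply: le_trans (_ : e / 4 * n%:R <= _); last by rewrite ler_wpM2l ?ler_nat // ltW.
  by near: n; exact: eventually_le_mul_nat.
have hg : (if (n.+1 %% b == 0)%N then 0 else `|g (n.+1 %% b) n.+1|) <= e / 4 * n.+1%:R.
  case: eqP => [_|/eqP r0]; first by rewrite mulr_ge0 ?ltW.
  by apply: gN; [near: n; exists N => // m /leqW | rewrite lt0n | rewrite ltn_pmod].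
have := rate_inf_ge0; nra.
Unshelve. all: by end_near. Qed.

Lemma almost_subadditive_cvg : exists l : R, (fun n => a n.+1 / n.+1%:R) @ \oo --> l.
Proof.
exists rate_inf; apply/cvgrPdist_le => e e0.
near=> n; rewrite ler_distl; apply/andP; split.
- by rewrite lerBlDr; near: n; exact: eventually_rate_le.
- by rewrite -lerBlDr; near: n; exact: eventually_rate_ge.
Unshelve. all: by end_near. Qed.

End AlmostSubadditive.

Section InformationRate.
Variables (R : realType) (A : finType) (O : choiceType).
Variables (X : process R A) (Zs : channel R A O) (b : nat) (G : nat -> nat -> R).
Hypothesis b0 : (0 < b)%N.
Hypothesis Xblock : forall (t : nat) (x : seq A), (0 < t)%N -> size x = (t * b)%N ->
  px X x = \prod_(i < t) px X (block b i x).
Hypothesis Zs_merge : forall m n, (1 <= m)%N -> (m <= n)%N -> merge_coupling X Zs n m.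
Hypothesis Zs_suffix : forall r n, (0 < r)%N -> (r <= n)%N ->
  refine_coupling X Zs n (fun x => [:: take (n - r) x; drop (n - r) x]) (G r n).

Let a n := fine (mi (joint_n X Zs n)).

Lemma mi_joint_nE n : mi (joint_n X Zs n) = (a n)%:E.
Proof. by rewrite fineK ?fin_num_mi_joint_n. Qed.

Lemma mi_joint_n_fine_ge0 n : 0 <= a n.
Proof. by rewrite -lee_fin -mi_joint_nE mi_joint_n_ge0. Qed.

Lemma mi_joint_split_block u n : (0 < u)%N -> (u * b <= n)%N ->
  mi (joint_split X Zs n (u * b)) = (a (u * b) + a (n - u * b))%:E.
Proof.
move=> u0 ubn; rewrite mi_joint_split // => [|x]; last exact: pXn_split_block.
by rewrite !mi_joint_nE.
Qed.

Lemma mi_joint_n_subadd u n : (0 < u)%N -> (u * b < n)%N -> a n <= a (u * b) + a (n - u * b).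
Proof.
move=> u0 ubn; have ub0 : (0 < u * b)%N by rewrite muln_gt0 u0.
have := mi_merge_le (Zs_merge ub0 (ltnW ubn)).
rewrite mi_joint_split_block //; last exact: ltnW.
by rewrite mi_joint_nE lee_fin.
Qed.

Lemma mi_joint_n_superadd r t : (0 < r)%N -> (r < b)%N -> (0 < t)%N ->
  a (t * b) + a r <= a (t * b + r) + G r (t * b + r).
Proof.
move=> r0 rb t0; have := mi_refine_le (Zs_suffix r0 (leq_addl (t * b) r)).
rewrite addnK mi_joint_split_block ?leq_addr // addKn mi_joint_nE.
by rewrite -EFinD lee_fin.
Qed.

End InformationRate.

Lemma admissible_suffix_bound (R : realType) (A : finType) (O O' : choiceType)
    (Z : channel R A O) (Zs : channel R A O') :
  admissible Z Zs -> exists G : nat -> nat -> R, forall r, (0 < r)%N ->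
    little_o_id (G r) /\ forall (X : process R A) n, (r <= n)%N ->
      refine_coupling X Zs n (fun x => [:: take (n - r) x; drop (n - r) x]) (G r n).
Proof.
move=> [_ [_ [_ [Zs_refine _]]]].
have exG r : exists g : nat -> R, (0 < r)%N -> little_o_id g /\
    forall (X : process R A) n, (r <= n)%N ->
      refine_coupling X Zs n (fun x => [:: take (n - r) x; drop (n - r) x]) (g n).
  have [r0|r0] := ltnP 0 r; last by exists (fun=> 0) => r_gt0; lia.
  have [gamma [_ [gamma_o [_ gamma_ref]]]] := Zs_refine r r0.
  by exists gamma => _; split => // X n rn; have [] := gamma_ref X n rn.
have [G HG] := choice exG; exists G => r r0; exact: HG.
Qed.

Unset Implicit Arguments.

Theorem lemma3p5 (R : realType) (A : finType) (O O' : choiceType)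
    (X : process R A) (Z : channel R A O) (Zs : channel R A O') :
  block_independent X -> admissible Z Zs ->
  exists L : R,
    ((fun n : nat => mi (joint_n X Zs n.+1) * ((n.+1)%:R^-1)%:E) @ \oo --> L%:E)%E /\
    info_rate X Z = L%:E /\ info_rate X Zs = L%:E.
Proof.
move=> [b [b0 Xblock]] ZZs; have [G HG] := admissible_suffix_bound ZZs.
case: ZZs => _ [rate_eq [Zs_merge _]].
have Zs_suffix r n : (0 < r)%N -> (r <= n)%N ->
    refine_coupling X Zs n (fun x => [:: take (n - r) x; drop (n - r) x]) (G r n).
  by move=> r0; have [_] := HG r r0; apply.
have [L aL] : exists L : R,
    (fun n => fine (mi (joint_n X Zs n.+1)) / n.+1%:R) @ \oo --> L.
  apply: (@almost_subadditive_cvg _ (fun n => fine (mi (joint_n X Zs n))) b G b0).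
  - by move=> n _; exact: mi_joint_n_fine_ge0.
  - exact: mi_joint_n_subadd b0 Xblock (Zs_merge X).
  - by move=> r r0 _; have [] := HG r r0.
  - exact: mi_joint_n_superadd b0 Xblock Zs_suffix.
have cvgL : ((fun n => mi (joint_n X Zs n.+1) * ((n.+1)%:R^-1)%:E) @ \oo --> L%:E)%E.
  under eq_fun do rewrite mi_joint_nE -EFinM.
  by apply: cvg_EFin => //; exact: nearW.
have [rateL _] := cvg_limn_einf_sup cvgL.
by exists L; rewrite rate_eq /info_rate rateL.
Qed.
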